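(* If $\mathbf M\in\mathcal M_1$ and $\mathbf F(\mathbf s)\neq\mathbf M\mathbf s$, then for each $i\in\mathbb N$ there exists $n=n(i)$ such that $$F_i(n;\mathbf 0)=\mathbb P\big(\|\mathbf Z_i(n)\|_1=0\big)>0.$$
   Context: A GWBP/$\infty$ has types $\mathbb N=\{1,2,\dots\}$. Each particle lives one unit of time; a type-$i$ particle produces, independently of everything else, a random vector $\mathbf Z_i=(Z_{ij})_{j\in\mathbb N}$ of children, with $Z_i:=\sum_jZ_{ij}<\infty$ a.s. $\mathbf Z_i(n)=(Z_{ij}(n))_j$ is the generation-$n$ population from one type-$i$ particle, $\|\mathbf Z_i(n)\|_1=\sum_jZ_{ij}(n)$. $F_i(n;\mathbf s)=\mathbb E\prod_js_j^{Z_{ij}(n)}$, $F_i(\mathbf s)=F_i(1;\mathbf s)$; ''$\mathbf F(\mathbf s)\neq\mathbf M\mathbf s$'' means it is not true that $F_i(\mathbf s)=\sum_jM_{ij}s_j$ for all $i,\mathbf s$. Mean matrix $\mathbf M=(M_{ij})$, $M_{ij}=\mathbb EZ_{ij}$, $M^{(n)}_{ij}=\mathbb EZ_{ij}(n)$, $M_i=\sum_jM_{ij}$. Irreducible: for all $i,j$ some $M^{(n)}_{ij}>0$; aperiodic: gcd of such $n$ is 1; then $\lim_n(M^{(n)}_{ij})^{1/n}=1/R$ for a common $R$. $\mathbf M\in\mathcal M_1$ means: (i) irreducible, aperiodic, $R=1$, 1-recurrent ($\sum_nM^{(n)}_{ij}=\infty$) and 1-positive ($\lim_nM^{(n)}_{ij}>0$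 for all $i,j$); then there are positive eigenvectors $\mathbf v\mathbf M=\mathbf v$, $\mathbf M\mathbf u^T=\mathbf u^T$, unique up to positive multiples, normalized with $\sum_jv_ju_j=1$; (ii) $\sum_jv_j=1$ and $\sup_iu_i<\infty$; (iii) $\lim_{N\to\infty}\sup_iM_i^{-1}\sum_{j>N}M_{ij}=0$ and $\lim_{K\to\infty}\sup_iM_i^{-1}\mathbb E[Z_i;Z_i>K]=0$. *)

From HB Require Import structures.
From mathcomp Require Import all_boot all_order all_algebra.
From mathcomp Require Import all_classical all_reals all_analysis.
Set Implicit Arguments. Unset Strict Implicit. Unset Printing Implicit Defensive.
Import Order.TTheory GRing.Theory Num.Theory.
Import numFieldNormedType.Exports.
Local Open Scope classical_set_scope.
Local Open Scope ring_scope.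

(* Types are indexed by nat (0-based; a relabelling of N = {1,2,...}).
   An offspring vector (Z_ij)_j with finite total Z_i is encoded by a finite
   sequence x : seq nat with Z_ij = nth 0 x j (trailing zeros irrelevant). *)

Section GW.
Variable R : realType.
Variable p : nat -> seq nat -> R.

Definition offspring_law : Prop :=
  forall i, (forall x, 0 <= p i x) /\ (\esum_(x in [set: seq nat]) (p i x)%:E = 1%E).

Definition genF (i : nat) (s : nat -> R) : R :=
  fine (\esum_(x in [set: seq nat]) (p i x * \prod_(j < size x) s j ^+ nth 0 x j)%:E).

Fixpoint genFn (n : nat) (i : nat) (s : nat -> R) : R :=
  match n with
  | 0 => s i
  | n'.+1 => genF i (fun j => genFn n' j s)
  end.

Definition meanM (i j : nat) : \bar R :=
  (\esum_(x in [set: seq nat]) (p i x * (nth 0 x j)%:R)%:E)%E.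

Definition meanRow (i : nat) : \bar R := (\sum_(j <oo) meanM i j)%E.

Fixpoint meanMn (n : nat) (i j : nat) : \bar R :=
  match n with
  | 0 => ((i == j)%:R)%:E
  | n'.+1 => (\sum_(k <oo) (meanMn n' i k * meanM k j))%E
  end.

Definition rowTail (i N : nat) : \bar R := (\sum_(N <= j <oo) meanM i j)%E.

Definition truncMean (i K : nat) : \bar R :=
  (\esum_(x in [set: seq nat])
     (p i x * (sumn x)%:R * (K < sumn x)%:R)%:E)%E.

Definition irreducible : Prop :=
  forall i j, exists n, (0 < n)%N /\ (0 < meanMn n i j)%E.

Definition aperiodic : Prop :=
  forall i (d : nat), (forall n, (0 < n)%N -> (0 < meanMn n i i)%E -> (d %| n)%N) -> d = 1%N.

(* lim_n (M^(n)_ij)^{1/n} = 1/R with R = 1 *)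
Definition conv_radius_one : Prop :=
  forall i j, (fun n : nat => poweR (meanMn n i j) (n%:R)^-1) @ \oo --> 1%E.

Definition one_recurrent : Prop :=
  forall i j, (\sum_(n <oo) meanMn n i j)%E = +oo%E.

Definition one_positive : Prop :=
  forall i j, exists l : \bar R, (0 < l)%E /\ (fun n => meanMn n i j) @ \oo --> l.

Definition eigen_cond : Prop :=
  exists v u : nat -> R,
    (forall j, 0 < v j) /\ (forall i, 0 < u i) /\
    (forall j, (\sum_(i <oo) ((v i)%:E * meanM i j))%E = (v j)%:E) /\
    (forall i, (\sum_(j <oo) (meanM i j * (u j)%:E))%E = (u i)%:E) /\
    (\sum_(j <oo) (v j * u j)%:E)%E = 1%E /\
    (\sum_(j <oo) (v j)%:E)%E = 1%E /\
    (exists B : R, forall i, u i <= B).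

(* (iii): the ratios M_i^{-1} (...) presuppose 0 < M_i < oo *)
Definition uniform_cond : Prop :=
  [/\ forall i, (meanRow i < +oo)%E,
      (fun N : nat => ereal_sup [set ((fine (rowTail i N)) / fine (meanRow i))%:E | i in [set: nat]])
         @ \oo --> 0%E
    & (fun K : nat => ereal_sup [set ((fine (truncMean i K)) / fine (meanRow i))%:E | i in [set: nat]])
         @ \oo --> 0%E].

Definition in_M1 : Prop :=
  irreducible /\ aperiodic /\ conv_radius_one /\ one_recurrent /\
  one_positive /\ eigen_cond /\ uniform_cond.

Definition F_linear : Prop :=
  forall i (s : nat -> R), (forall j, 0 <= s j <= 1) ->
    ((genF i s)%:E = \sum_(j <oo) (meanM i j * (s j)%:E))%E.

End GW.

From HB Require Import structures.
From mathcomp Require Import all_boot all_order all_algebra.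
From mathcomp Require Import all_classical all_reals all_analysis.
Import Order.TTheory GRing.Theory Num.Theory.

(* Call a type j immortal when F_j(n; 0) = 0 for every n.  Every offspring
   vector of positive probability of an immortal type contains an immortal
   child, since otherwise F_k(N + 1; 0) > 0 for some N; so the mean number w_k
   of immortal children of an immortal k is at least 1.  Pairing with the left
   eigenvector (v M = v, sum_j v_j = 1) gives sum_k v_k w_k = sum_{j immortal}
   v_j, which forces w_k = 1 on immortal types and w_k = 0 on the others: no
   mortal type has an immortal child, so by irreducibility one immortal type
   makes every type immortal.  Then every particle has a child, and the same
   argument applied to the set of all types shows that the mean number of
   children is 1; hence there is exactly one child almost surely, and
   F(s) = M s. *)

Local Open Scope classical_set_scope.
Local Open Scope ring_scope.

Section nonnegative_sums.
Context {R : realType}.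
Local Open Scope ereal_scope.

Lemma esumZl (T : choiceType) (S : set T) (r : R) (a : T -> \bar R) :
  (0 <= r)%R -> (forall x, 0 <= a x) ->
  \esum_(x in S) (r%:E * a x) = r%:E * \esum_(x in S) a x.
Proof.
move=> r0 a0; rewrite /esum -ereal_supZl //; last first.
  by apply/set0P; exists 0; exists set0; [exact: fsets_set0|rewrite fsbig_set0].
congr ereal_sup; apply/seteqP; split => y /=.
  move=> [A fsA <-]; exists (\sum_(x \in A) a x); first by exists A.
  by rewrite ge0_mule_fsumr.
by move=> [z [A fsA <-] <-]; exists A => //; rewrite ge0_mule_fsumr.
Qed.

Lemma esum_ge_term {T : choiceType} {a : T -> \bar R} x :
  (forall y, 0 <= a y) -> a x <= \esum_(y in [set: T]) a y.
Proof.
move=> a0; apply: esum_ge; exists [set x]; last by rewrite fsbig_set1.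
by split => //; exact: finite_set1.
Qed.

Lemma le_esum_eq {T : choiceType} {a b : T -> \bar R} :
  (forall x, 0 <= a x) -> (forall x, a x <= b x) ->
  \esum_(x in [set: T]) b x = \esum_(x in [set: T]) a x ->
  \esum_(x in [set: T]) a x < +oo -> a =1 b.
Proof.
move=> a0 ab eq_ab sa_lt x.
have a_fin y : a y \is a fin_num.
  by rewrite ge0_fin_numE // (le_lt_trans (esum_ge_term y a0)).
have sa_fin : \esum_(y in [set: T]) a y \is a fin_num.
  by rewrite ge0_fin_numE // esum_ge0.
pose c y := b y - a y.
have c0 y : 0 <= c y by rewrite sube_ge0 ?a_fin.
have bE y : b y = a y + c y by rewrite /c addeC subeK.
have sc0 : \esum_(y in [set: T]) c y = 0.
  move: eq_ab; under eq_esum do rewrite bE.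
  rewrite esumD // => /(congr1 (fun z => z - \esum_(y in [set: T]) a y)).
  by rewrite addeC addeK // subee.
have cx0 : c x = 0 by apply/eqP; rewrite eq_le c0 andbT -sc0 esum_ge_term.
by rewrite bE cx0 adde0.
Qed.

Lemma le_nneseries_eq {a b : nat -> \bar R} :
  (forall k, 0 <= a k) -> (forall k, a k <= b k) ->
  \sum_(k <oo) b k = \sum_(k <oo) a k -> \sum_(k <oo) a k < +oo -> a =1 b.
Proof.
move=> a0 ab; have b0 k : 0 <= b k by exact: le_trans (ab k).
by rewrite !nneseries_esumT //; exact: le_esum_eq.
Qed.

Lemma nneseries_ge_term {f : nat -> \bar R} {P : pred nat} {j} :
  (forall k, P k -> 0 <= f k) -> P j -> f j <= \sum_(k <oo | P k) f k.
Proof.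
move=> f0 Pj; rewrite (nneseriesD1 f0 Pj) leeDl //.
by apply: nneseries_ge0 => k _ /andP[/f0].
Qed.

Lemma nneseries_esum_swap (T : choiceType) (Q : pred nat) (f : T -> nat -> \bar R) :
  (forall x j, 0 <= f x j) ->
  \sum_(j <oo | Q j) \esum_(x in [set: T]) f x j =
  \esum_(x in [set: T]) \sum_(j <oo | Q j) f x j.
Proof.
move=> f0; rewrite nneseries_esum; last by move=> n _; exact: esum_ge0.
under [RHS]eq_esum do rewrite nneseries_esum//.
rewrite !esum_esum//.
rewrite (reindex_esum ([set: T] `*`` (fun=> [set x | Q x])) _ (fun x => (x.2, x.1)))//.
split=> //=.
- by move=> [i j] [/=].
- by move=> [i1 i2] [j1 j2] /= _ _ [] -> ->.
- by move=> [i1 i2] [Pi1 Qi2] /=; exists (i2, i1).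
Qed.

Lemma nneseries_finite_support (f : nat -> R) n :
  (forall j, (n <= j)%N -> f j = 0%R) -> (forall j, (0 <= f j)%R) ->
  \sum_(j <oo) (f j)%:E = (\sum_(j < n) f j)%:E.
Proof.
move=> fz f0; rewrite (nneseries_split 0 n) => [|k _]; last by rewrite lee_fin.
rewrite add0n eseries0 => [|i ni _]; last by rewrite fz.
by rewrite adde0 sumEFin big_mkord.
Qed.

End nonnegative_sums.

Lemma nth_le_sumn (x : seq nat) j : (nth 0 x j <= sumn x)%N.
Proof.
elim: x j => [|a x IH] [|j] //=; first exact: leq_addr.
exact: leq_trans (IH j) (leq_addl _ _).
Qed.

Section monomials.
Context {R : realType}.

Definition monomial (s : nat -> R) (x : seq nat) : R :=
  \prod_(j < size x) s j ^+ nth 0 x j.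

Definition in_unit_cube (s : nat -> R) : Prop := forall j, 0 <= s j <= 1.

Lemma monomial_ge0_le1 s x : in_unit_cube s -> 0 <= monomial s x <= 1.
Proof.
move=> s01; apply/andP; split.
  by apply: prodr_ge0 => j _; apply: exprn_ge0; case/andP: (s01 j).
apply: prodr_ile1 => j _; case/andP: (s01 j) => s0 s1.
by rewrite exprn_ge0 // exprn_ile1.
Qed.

Lemma le_monomial s t x : (forall j, 0 <= s j) -> (forall j, s j <= t j) ->
  monomial s x <= monomial t x.
Proof.
move=> s0 st; apply: ler_prod => j _.
by rewrite exprn_ge0 //= lerXn2r // nnegrE (le_trans (s0 j)).
Qed.

Lemma monomial_eq0 s x : monomial s x = 0 -> exists j, (0 < nth 0 x j)%N /\ s j = 0.
Proof.
move/eqP/prodf_eq0 => [j _]; rewrite expf_eq0 => /andP[xj /eqP sj].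
by exists j.
Qed.

Lemma monomial_sumn1 s x : sumn x = 1%N ->
  monomial s x = \sum_(j < size x) (nth 0 x j)%:R * s j.
Proof.
rewrite /monomial; elim: x s => [|[|[|a]] x IH] s //= sx.
- by rewrite !big_ord_recl /= expr0 mul1r mul0r add0r (IH (fun j => s j.+1)).
- have x0 j : nth 0 x j = 0%N.
    by apply/eqP; rewrite -leqn0 -(addnI sx) (nth_le_sumn x j).
  rewrite !big_ord_recl /= expr1 mul1r big1 ?big1 ?mulr1 ?addr0 // => j _.
    by rewrite /bump /= x0 mul0r.
  by rewrite /bump /= x0 expr0.
Qed.

End monomials.

Definition ext_prob {R : realType} (p : nat -> seq nat -> R) n j :=
  genFn p n j (fun=> 0).

Definition immortal {R : realType} (p : nat -> seq nat -> R) j :=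
  forall n, ext_prob p n j = 0.

Section generating_function.
Context {R : realType} {p : nat -> seq nat -> R} (hp : offspring_law p).

Lemma law_ge0 i x : 0 <= p i x.
Proof. by case: (hp i). Qed.

Lemma law_gt0 i x : p i x != 0 -> 0 < p i x.
Proof. by rewrite lt0r law_ge0 andbT. Qed.

Lemma esum_law_monomial_ge0_le1 i s : in_unit_cube s ->
  (0 <= \esum_(x in [set: seq nat]) (p i x * monomial s x)%:E <= 1)%E.
Proof.
move=> s01; have [_ <-] := hp i; rewrite esum_ge0 => [|x _] /=; last first.
  by rewrite lee_fin mulr_ge0 ?law_ge0 //; case/andP: (monomial_ge0_le1 _ x s01).
apply: le_esum => x _; rewrite lee_fin ler_piMr ?law_ge0 //.
by case/andP: (monomial_ge0_le1 _ x s01).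
Qed.

Lemma genFE i s : in_unit_cube s ->
  (genF p i s)%:E = \esum_(x in [set: seq nat]) (p i x * monomial s x)%:E.
Proof.
move=> /(esum_law_monomial_ge0_le1 i)/andP[E0 E1].
by rewrite fineK // ge0_fin_numE // (le_lt_trans E1) ?ltry.
Qed.

Lemma genF_unit_cube s : in_unit_cube s -> in_unit_cube (genF p ^~ s).
Proof. by move=> s01 i; rewrite -2!lee_fin genFE // esum_law_monomial_ge0_le1. Qed.

Lemma le_genF i s t : in_unit_cube s -> in_unit_cube t -> (forall j, s j <= t j) ->
  genF p i s <= genF p i t.
Proof.
move=> s01 t01 st; rewrite -lee_fin !genFE //; apply: le_esum => x _.
rewrite lee_fin ler_wpM2l ?law_ge0 // le_monomial // => j.
by case/andP: (s01 j).
Qed.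

Lemma genF_eq0 i s x : in_unit_cube s -> genF p i s = 0 -> 0 < p i x ->
  exists j, (0 < nth 0 x j)%N /\ s j = 0.
Proof.
move=> s01 F0 px; apply: monomial_eq0; apply/eqP.
have [m0 _] := andP (monomial_ge0_le1 _ x s01).
rewrite eq_le m0 andbT -(pmulr_rle0 _ px) -lee_fin.
rewrite -F0 genFE //; apply: (esum_ge_term x) => y.
by rewrite lee_fin mulr_ge0 ?law_ge0 //; case/andP: (monomial_ge0_le1 _ y s01).
Qed.

Lemma ext_prob_unit_cube n : in_unit_cube (ext_prob p n).
Proof.
elim: n => [|n IH] j; first by rewrite /ext_prob /= lexx ler01.
exact: genF_unit_cube.
Qed.

Lemma ext_prob_le j : {homo ext_prob p ^~ j : m n / (m <= n)%N >-> m <= n}.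
Proof.
apply: homo_leq => [//|y x z|n]; first exact: le_trans.
elim: n j => [|n IH] j; first by case/andP: (ext_prob_unit_cube 1 j).
exact: le_genF (ext_prob_unit_cube _) (ext_prob_unit_cube _) IH.
Qed.

Lemma ext_prob_gt0_on_support (x : seq nat) :
  (forall j, (0 < nth 0 x j)%N -> ~ immortal p j) ->
  exists N, forall j, (0 < nth 0 x j)%N -> 0 < ext_prob p N j.
Proof.
move=> mortal.
have /fin_all_exists[N HN] :
    forall j : 'I_(size x), exists n, (0 < nth 0 x j)%N -> 0 < ext_prob p n j.
  move=> j; have [_|xj] := posnP (nth 0 x j); first by exists 0%N.
  have /existsNP[n /eqP qn] := mortal _ xj.
  by exists n; rewrite lt0r qn; case/andP: (ext_prob_unit_cube n j).
exists (\max_(i < size x) N i) => j xj; have js : (j < size x)%N.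
  by rewrite ltnNge; apply: contraTN xj => /(nth_default 0) ->.
apply: lt_le_trans (HN (Ordinal js) xj) _; apply: ext_prob_le.
exact: (leq_bigmax (Ordinal js)).
Qed.

Lemma immortal_child {k x} : immortal p k -> 0 < p k x ->
  exists j, (0 < nth 0 x j)%N /\ immortal p j.
Proof.
move=> Ik px; apply: contrapT => noIchild.
have [|N HN] := @ext_prob_gt0_on_support x.
  by move=> j xj Ij; apply: noIchild; exists j.
have [j [xj qj]] := genF_eq0 _ _ _ (ext_prob_unit_cube N) (Ik N.+1) px.
by move: (HN j xj); rewrite qj ltxx.
Qed.

End generating_function.

Definition meanM_into {R : realType} (p : nat -> seq nat -> R) (A : set nat) k :=
  (\sum_(j <oo | j \in A) meanM p k j)%E.

Section mean_matrix.
Context {R : realType} {p : nat -> seq nat -> R} (hp : offspring_law p).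
Local Open Scope ereal_scope.

Lemma meanM_ge0 i j : 0 <= meanM p i j.
Proof. by apply: esum_ge0 => x _; rewrite lee_fin mulr_ge0 ?(law_ge0 hp). Qed.

Lemma meanM_intoE A k : meanM_into p A k =
  \esum_(x in [set: seq nat]) \sum_(j <oo | j \in A) (p k x * (nth 0 x j)%:R)%:E.
Proof.
rewrite /meanM_into /meanM nneseries_esum_swap // => x j.
by rewrite lee_fin mulr_ge0 ?(law_ge0 hp).
Qed.

Lemma meanM_into_ge1 A k :
  (forall x, (0 < p k x)%R -> exists j, (0 < nth 0 x j)%N /\ A j) ->
  1 <= meanM_into p A k.
Proof.
move=> child; rewrite meanM_intoE; have [_ <-] := hp k.
apply: le_esum => x _; have [->|/(law_gt0 hp) px] := eqVneq (p k x) 0%R.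
  by apply: nneseries_ge0 => j _; rewrite mul0r.
have [j [xj Aj]] := child x px.
apply: le_trans (nneseries_ge_term _ (mem_set Aj)) => [|i _].
  by rewrite lee_fin ler_peMr ?(law_ge0 hp) // ler1n.
by rewrite lee_fin mulr_ge0 ?(law_ge0 hp).
Qed.

Lemma meanM_into_setT k :
  meanM_into p [set: nat] k = \esum_(x in [set: seq nat]) (p k x * (sumn x)%:R)%:E.
Proof.
rewrite meanM_intoE; apply: eq_esum => x _.
rewrite (eq_eseriesl _ (Q := xpredT)) => [|j]; last by rewrite /= in_setT.
rewrite (@nneseries_finite_support _ _ (size x)) => [|j jx|j].
- by rewrite -mulr_sumr -natr_sum sumnE (big_nth 0%N) big_mkord.
- by rewrite nth_default // mulr0.
- by rewrite mulr_ge0 ?(law_ge0 hp).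
Qed.

Lemma meanM_linear_form k s : (forall j, 0 <= s j)%R ->
  \sum_(j <oo) (meanM p k j * (s j)%:E) =
  \esum_(x in [set: seq nat]) (p k x * \sum_(j < size x) (nth 0 x j)%:R * s j)%:E.
Proof.
move=> s0.
transitivity (\sum_(j <oo)
    \esum_(x in [set: seq nat]) (p k x * ((nth 0 x j)%:R * s j))%:E).
  apply: eq_eseriesr => j _; rewrite muleC /meanM -esumZl // => [|x].
    by apply: eq_esum => x _; rewrite -EFinM mulrCA (mulrC (s j)).
  by rewrite lee_fin mulr_ge0 ?(law_ge0 hp).
rewrite nneseries_esum_swap => [|x j]; last by rewrite lee_fin !mulr_ge0 ?(law_ge0 hp).
apply: eq_esum => x _; rewrite (@nneseries_finite_support _ _ (size x)) => [|j jx|j].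
- by rewrite mulr_sumr.
- by rewrite nth_default // mul0r mulr0.
- by rewrite !mulr_ge0 ?(law_ge0 hp).
Qed.

Section left_eigenvector.
Context {v : nat -> R} {A : set nat}.
Hypothesis v_gt0 : forall j, (0 < v j)%R.
Hypothesis vM : forall j, \sum_(i <oo) ((v i)%:E * meanM p i j) = (v j)%:E.
Hypothesis v_sum1 : \sum_(j <oo) (v j)%:E = 1.
Hypothesis A_ge1 : forall k, A k -> 1 <= meanM_into p A k.

Lemma eigen_meanM_into :
  \sum_(k <oo) (v k)%:E * meanM_into p A k = \sum_(j <oo | j \in A) (v j)%:E.
Proof.
transitivity (\sum_(k <oo) \sum_(j <oo | j \in A) ((v k)%:E * meanM p k j)).
  by apply: eq_eseriesr => k _; rewrite nneseriesZl // => j _; exact: meanM_ge0.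
rewrite nneseries_interchange => [|k j]; first by apply: eq_eseriesr => j _; exact: vM.
by rewrite mule_ge0 ?lee_fin ?(ltW (v_gt0 _)) ?meanM_ge0.
Qed.

Lemma meanM_into_indicator k : meanM_into p A k = ((k \in A)%:R)%:E.
Proof.
have v0 i : (0 <= v i)%R := ltW (v_gt0 i).
have w0 i : 0 <= meanM_into p A i.
  by apply: nneseries_ge0 => j _ _; exact: meanM_ge0.
pose a i := (v i)%:E * ((i \in A)%:R)%:E.
have a0 i : 0 <= a i by rewrite mule_ge0 ?lee_fin.
have a_le i : a i <= (v i)%:E * meanM_into p A i.
  rewrite /a; case: (boolP (i \in A)) => [/set_mem Ai|_].
    by rewrite mulr1n mule1 lee_pemulr ?lee_fin ?A_ge1.
  by rewrite lee_wpmul2l ?lee_fin //; exact: w0.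
have sum_a : \sum_(i <oo) a i = \sum_(j <oo | j \in A) (v j)%:E.
  rewrite [RHS]eseries_mkcond; apply: eq_eseriesr => i _.
  by rewrite /a; case: ifP; rewrite ?mulr1n ?mule1 ?mulr0n ?mule0.
have sum_a_lt : \sum_(i <oo) a i < +oo.
  rewrite sum_a (@le_lt_trans _ _ (\sum_(j <oo) (v j)%:E)) //;
    last by rewrite v_sum1 ltry.
  rewrite [leLHS]eseries_mkcond.
  by apply: lee_nneseries => [i _ _|i _]; case: ifP => _; rewrite lee_fin.
have sums_eq := etrans eigen_meanM_into (esym sum_a).
have /(_ k)/eqP := le_nneseries_eq a0 a_le sums_eq sum_a_lt.
by rewrite eq_le !lee_pmul2l ?lte_fin // -eq_le eq_sym => /eqP.
Qed.

Lemma meanM_enter0 k j : ~ A k -> A j -> meanM p k j = 0.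
Proof.
move=> nAk Aj; apply/le_anti; rewrite meanM_ge0 andbT.
have <- : meanM_into p A k = 0 by rewrite meanM_into_indicator memNset.
by apply: nneseries_ge_term (mem_set Aj) => i _; exact: meanM_ge0.
Qed.

Lemma meanMn_enter0 n k j : ~ A k -> A j -> meanMn p n k j = 0.
Proof.
move=> nAk; elim: n j => [|n IH] j Aj /=.
  by case: eqP => // kj; rewrite kj in nAk.
apply: eseries0 => l _ _; have [Al|nAl] := pselect (A l).
  by rewrite IH // mul0e.
by rewrite meanM_enter0 // mule0.
Qed.

Lemma irreducible_closed_full i : irreducible p -> A i -> forall k, A k.
Proof.
move=> irr Ai k; apply: contrapT => nAk.
have [n [_]] := irr k i.
by rewrite meanMn_enter0 // ltxx.
Qed.

End left_eigenvector.
End mean_matrix.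

Section single_child.
Context {R : realType} {p : nat -> seq nat -> R} (hp : offspring_law p).
Context {v : nat -> R}.
Hypothesis v_gt0 : forall j, 0 < v j.
Hypothesis vM : forall j, (\sum_(i <oo) ((v i)%:E * meanM p i j))%E = (v j)%:E.
Hypothesis v_sum1 : (\sum_(j <oo) (v j)%:E)%E = 1%E.
Hypothesis all_immortal : forall k, immortal p k.

Lemma has_child {k x} : 0 < p k x -> exists j, (0 < nth 0 x j)%N /\ [set: nat] j.
Proof. by case/(immortal_child hp (all_immortal k)) => j [xj _]; exists j. Qed.

Lemma mean_offspring_eq1 k :
  (\esum_(x in [set: seq nat]) (p k x * (sumn x)%:R)%:E)%E = 1%E.
Proof.
rewrite -(meanM_into_setT hp) (meanM_into_indicator hp v_gt0 vM v_sum1) ?in_setT //.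
by move=> i _; apply: meanM_into_ge1 => // y /has_child.
Qed.

Lemma sumn_eq1 k x : 0 < p k x -> sumn x = 1%N.
Proof.
move=> px; have [_ p1] := hp k.
have a0 y : (0 <= (p k y)%:E)%E by rewrite lee_fin law_ge0.
have ab y : ((p k y)%:E <= (p k y * (sumn y)%:R)%:E)%E.
  rewrite lee_fin; have [->|/(law_gt0 hp) py] := eqVneq (p k y) 0; first by rewrite mul0r.
  have [j [yj _]] := has_child py.
  by rewrite ler_peMr ?law_ge0 // ler1n (leq_trans yj (nth_le_sumn y j)).
have sum_lt : (\esum_(y in [set: seq nat]) (p k y)%:E < +oo)%E by rewrite p1 ltry.
have [] := le_esum_eq a0 ab (etrans (mean_offspring_eq1 k) (esym p1)) sum_lt x.
rewrite -{1}[p k x]mulr1 => /(mulfI (lt0r_neq0 px))/eqP.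
by rewrite eq_sym pnatr_eq1 => /eqP.
Qed.

Lemma F_linear_of_immortal : F_linear p.
Proof.
move=> k s s01; rewrite genFE // meanM_linear_form // => [|j]; last by case/andP: (s01 j).
apply: eq_esum => x _; have [->|/(law_gt0 hp) px] := eqVneq (p k x) 0.
  by rewrite !mul0r.
by rewrite monomial_sumn1 // (sumn_eq1 k x px).
Qed.

End single_child.

Theorem lemma2 (R : realType) (p : nat -> seq nat -> R) :
  offspring_law p -> in_M1 p -> ~ F_linear p ->
  forall i : nat, exists n : nat, 0 < genFn p n i (fun _ => 0).
Proof.
move=> hp [irr [_ [_ [_ [_ [eigen _]]]]]] nonlinear i.
have [v [_ [v_gt0 [_ [vM [_ [_ [v_sum1 _]]]]]]]] := eigen.
apply: contrapT => no_ext.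
have Ii : immortal p i.
  move=> n; have /andP[q0 _] := ext_prob_unit_cube hp n i.
  apply/le_anti; rewrite q0 andbT leNgt; apply/negP => q_pos.
  by apply: no_ext; exists n.
have immortal_ge1 j : immortal p j -> (1 <= meanM_into p (immortal p) j)%E.
  by move=> Ij; apply: meanM_into_ge1 => // x /(immortal_child hp Ij).
have all_immortal := irreducible_closed_full hp v_gt0 vM v_sum1 immortal_ge1 i irr Ii.
exact: nonlinear (F_linear_of_immortal hp v_gt0 vM v_sum1 all_immortal).
Qed.
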